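(* For $n\ge2$, the map $T_n$ restricts to a surjective map $T_n:X_n\setminus U_{12}\to\mathbb{C}^{3n-3}\setminus Z_{12}$.
   Context: $X_n=SL(2,\mathbb{C})^{\times n}$. The Magnus trace map $T_n:X_n\to\mathbb{C}^{3n-3}$ is $T_n(A_1,\dots,A_n)=(t_1,t_2,t_{12},t_3,t_{13},t_{23},\dots,t_n,t_{1n},t_{2n})$, with $t_j=\mathsf{tr}(A_j)$, $t_{jk}=\mathsf{tr}(A_jA_k)$ (for $n=2$ this is $(t_1,t_2,t_{12})$). Writing points of $\mathbb{C}^{3n-3}$ as $\mathbf{z}=(z_1,z_2,z_{12},\dots,z_n,z_{1n},z_{2n})$, set $\sigma_{12}(\mathbf{z})=z_1^2+z_2^2+z_{12}^2-z_1z_2z_{12}-4$, $Z_{12}=\{\mathbf{z}:\sigma_{12}(\mathbf{z})=0\}$ and $U_{12}=\{A\in X_n: t_1^2+t_2^2+t_{12}^2-t_1t_2t_{12}-4=0\}$ (equivalently $\mathsf{tr}(A_1A_2A_1^{-1}A_2^{-1})=2$). *)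

(* Complex numbers are R[i] = complex R for R : realType
   (every realType is the real numbers, so R[i] is C). *)
From HB Require Import structures.
From mathcomp Require Import all_boot all_order all_algebra.
From mathcomp Require Import complex.
From mathcomp Require Import reals.
Set Implicit Arguments. Unset Strict Implicit. Unset Printing Implicit Defensive.
Import Order.TTheory GRing.Theory Num.Theory.
Local Open Scope ring_scope.

Section Defs.
Variable R : realType.
Local Notation C := R[i].

(* The point A = (A_1,...,A_n) of X_n = SL(2,C)^n : an n-tuple of 2x2
   complex matrices, each of determinant 1.  Here A_j (1-based) is the
   entry of 0-based index j-1. *)
Definition inX (n : nat) (A : n.-tuple 'M[C]_2) : Prop :=
  forall i : 'I_n, \det (tnth A i) = 1.

Definition Amat (n : nat) (A : n.-tuple 'M[C]_2) (m : nat) : 'M[C]_2 :=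
  nth 1%:M A m.

(* coordinate k (0-based) of the Magnus trace map:
   block b = k %/ 3, r = k %% 3;
   block 0 : (t_1, t_2, t_12);
   block b >= 1 : (t_j, t_1j, t_2j) with j = b + 2 (1-based). *)
Definition magnus_coord (n : nat) (A : n.-tuple 'M[C]_2) (k : nat) : C :=
  let b := (k %/ 3)%N in
  let r := (k %% 3)%N in
  if b == 0%N then
    (if r == 0%N then \tr (Amat A 0)
     else if r == 1%N then \tr (Amat A 1)
     else \tr (Amat A 0 *m Amat A 1))
  else
    let m := b.+1 in
    (if r == 0%N then \tr (Amat A m)
     else if r == 1%N then \tr (Amat A 0 *m Amat A m)
     else \tr (Amat A 1 *m Amat A m)).

Definition magnus (n : nat) (A : n.-tuple 'M[C]_2) : (3 * n - 3).-tuple C :=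
  [tuple magnus_coord A (nat_of_ord k) | k < 3 * n - 3].

Definition sigma12 (m : nat) (z : m.-tuple C) : C :=
  let z1 := nth 0 z 0 in let z2 := nth 0 z 1 in let z12 := nth 0 z 2 in
  z1 ^+ 2 + z2 ^+ 2 + z12 ^+ 2 - z1 * z2 * z12 - 4.

Definition inZ12 (m : nat) (z : m.-tuple C) : Prop := sigma12 z = 0.

Definition inU12 (n : nat) (A : n.-tuple 'M[C]_2) : Prop :=
  let t1 := \tr (Amat A 0) in let t2 := \tr (Amat A 1) in
  let t12 := \tr (Amat A 0 *m Amat A 1) in
  t1 ^+ 2 + t2 ^+ 2 + t12 ^+ 2 - t1 * t2 * t12 - 4 = 0.

End Defs.

(* The first three Magnus coordinates are (t_1, t_2, t_12), so sigma_12 (T_n A)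
   vanishes exactly on U_12.  For surjectivity, take A_1, A_2 in SL(2) realising
   (z_1, z_2, z_12) (explicit matrices, one square root), and realise every
   further block (tr A_j, tr A_1 A_j, tr A_2 A_j) by A_j = X_0 + t K, where
   K = A_1 A_2 - A_2 A_1.  X_0 in the span of 1, A_1, A_2 is found by solving a
   linear system whose matrix, the Gram matrix of 1, A_1, A_2 for the trace form,
   has determinant -2 sigma_12 <> 0.  K is trace-orthogonal to 1, A_1, A_2 and
   det K = -sigma_12, so the traces do not see t and
   det A_j = det X_0 - t^2 sigma_12, which a square root t makes equal to 1. *)

From HB Require Import structures.
From mathcomp Require Import all_boot all_order all_algebra.
From mathcomp Require Import complex.
From mathcomp Require Import reals.
From mathcomp Require Import ring zify.
Set Implicit Arguments. Unset Strict Implicit. Unset Printing Implicit Defensive.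
Import Order.TTheory GRing.Theory Num.Theory.
Local Open Scope ring_scope.

Section SmallMatrices.
Variable R : comNzRingType.

Definition sigma (x y z : R) : R := x ^+ 2 + y ^+ 2 + z ^+ 2 - x * y * z - 4.

Implicit Types A B : 'M[R]_2.

Definition mx2 (a b c d : R) : 'M[R]_2 :=
  \matrix_(i, j) if i == 0 then (if j == 0 then a else b) else (if j == 0 then c else d).

Lemma det_mx2E A : \det A = A 0 0 * A 1 1 - A 0 1 * A 1 0.
Proof.
pose a (i j : nat) := A (inord i) (inord j).
have Aa i j : A i j = a i j by rewrite /a !inord_val.
rewrite (expand_det_row _ 0) !big_ord_recl big_ord0 /cofactor !det_mx11 !mxE !Aa /=.
ring.
Qed.

Lemma det_mx3E (M : 'M[R]_3) : \det M =
  M 0 0 * (M 1 1 * M 2 2 - M 1 2 * M 2 1) - M 0 1 * (M 1 0 * M 2 2 - M 1 2 * M 2 0)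
  + M 0 2 * (M 1 0 * M 2 1 - M 1 1 * M 2 0).
Proof.
pose m (i j : nat) := M (inord i) (inord j).
have Mm i j : M i j = m i j by rewrite /m !inord_val.
rewrite (expand_det_row _ 0) !big_ord_recl big_ord0 /cofactor !det_mx2E !mxE !Mm /=.
ring.
Qed.

Lemma mxtrace2E A : \tr A = A 0 0 + A 1 1.
Proof.
by rewrite /mxtrace !big_ord_recl big_ord0 addr0 (_ : lift _ _ = 1) //; apply: val_inj.
Qed.

Lemma mulmx2E A B i j : (A *m B) i j = A i 0 * B 0 j + A i 1 * B 1 j.
Proof.
by rewrite !mxE !big_ord_recl big_ord0 addr0 (_ : lift _ _ = 1) //; apply: val_inj.
Qed.

Lemma det2D A B : \det (A + B) = \det A + \det B + \tr A * \tr B - \tr (A *m B).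
Proof. rewrite !det_mx2E !mxtrace2E !mulmx2E !mxE; ring. Qed.

Lemma mxtrace_sqr2 A : \tr (A *m A) = \tr A ^+ 2 - 2 * \det A.
Proof. rewrite det_mx2E !mxtrace2E !mulmx2E; ring. Qed.

Lemma det_commutator2 A B :
  \det (A *m B - B *m A) = \tr A * \tr B * \tr (A *m B) - \tr (A *m B) ^+ 2
    - \det B * \tr A ^+ 2 - \det A * \tr B ^+ 2 + 4 * \det A * \det B.
Proof.
have subE i j : (A *m B - B *m A) i j = (A *m B) i j - (B *m A) i j by rewrite !mxE.
by rewrite !det_mx2E !mxtrace2E !subE !mulmx2E; ring.
Qed.

Lemma det_commutator_SL2 A B : \det A = 1 -> \det B = 1 ->
  \det (A *m B - B *m A) = - sigma (\tr A) (\tr B) (\tr (A *m B)).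
Proof. by move=> dA dB; rewrite det_commutator2 dA dB /sigma; ring. Qed.

End SmallMatrices.

Section QuadraticallyClosed.
Variable F : fieldType.
Hypothesis two_neq0 : (2 : F) != 0.
Variable sqrt : F -> F.
Hypothesis sqrtK : forall x, sqrt x ^+ 2 = x.

Lemma sl2_pair_exists x y z : exists A B : 'M[F]_2,
  [/\ \det A = 1, \det B = 1, \tr A = x, \tr B = y & \tr (A *m B) = z].
Proof.
have four_neq0 : (4 : F) != 0 by rewrite (natrM F 2 2) mulf_neq0.
pose b := (z + sqrt (z ^+ 2 - 4)) / 2.
have bK : b * (z - b) = 1.
  have -> : b * (z - b) = (z ^+ 2 - sqrt (z ^+ 2 - 4) ^+ 2) / 4.
    by rewrite /b; field; rewrite four_neq0.
  by rewrite sqrtK; field.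
exists (mx2 x (-1) 1 0), (mx2 0 b (b - z) y).
rewrite !det_mx2E !mxtrace2E !mulmx2E !mxE /=.
by split; [ring | rewrite -bK; ring | ring | ring | ring].
Qed.

Section TraceLift.
Variables A B : 'M[F]_2.
Hypotheses (detA : \det A = 1) (detB : \det B = 1).
Hypothesis sigmaAB_neq0 : sigma (\tr A) (\tr B) (\tr (A *m B)) != 0.

Let K := A *m B - B *m A.

Definition trace_frame (i : 'I_3) : 'M[F]_2 := tnth [tuple 1%:M; A; B] i.

Definition trace_gram : 'M[F]_3 :=
  \matrix_(i, j) \tr (trace_frame i *m trace_frame j).

Definition span_lift (w : 'cV[F]_3) : 'M[F]_2 :=
  \sum_j (invmx trace_gram *m w) j 0 *: trace_frame j.

Definition trace_lift (w : 'cV[F]_3) : 'M[F]_2 :=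
  span_lift w
  + sqrt ((\det (span_lift w) - 1) / sigma (\tr A) (\tr B) (\tr (A *m B))) *: K.

Lemma det_trace_gram :
  \det trace_gram = - 2 * sigma (\tr A) (\tr B) (\tr (A *m B)).
Proof.
rewrite det_mx3E !mxE /trace_frame /= !mul1mx !mulmx1 mxtrace1 !mxtrace_sqr2 detA detB.
rewrite (mxtrace_mulC B A) /sigma; ring.
Qed.

Lemma trace_gram_unit : trace_gram \in unitmx.
Proof. by rewrite unitmxE unitfE det_trace_gram mulf_neq0 ?oppr_eq0. Qed.

Lemma mxtrace_frame_span_lift w i : \tr (trace_frame i *m span_lift w) = w i 0.
Proof.
rewrite mulmx_sumr raddf_sum -[w in RHS](mulKVmx trace_gram_unit) mxE.
by apply: eq_bigr => j _; rewrite /= -scalemxAr mxtraceZ [trace_gram _ _]mxE mulrC.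
Qed.

Lemma mxtrace_frame_commutator i : \tr (trace_frame i *m K) = 0.
Proof.
have trK M : \tr (M *m (A *m B)) = \tr (M *m (B *m A)) -> \tr (M *m K) = 0.
  by move=> eqM; rewrite /K mulmxBr raddfB /= eqM subrr.
apply: trK; case: i => [[|[|[|//]]] ?] /=; rewrite /trace_frame /=.
- by rewrite !mul1mx mxtrace_mulC.
- by rewrite [in RHS]mulmxA [in RHS]mxtrace_mulC.
- by rewrite mulmxA mxtrace_mulC.
Qed.

Lemma mxtrace_span_lift_commutator w : \tr (span_lift w *m K) = 0.
Proof.
rewrite mulmx_suml raddf_sum big1 // => j _.
by rewrite /= -scalemxAl mxtraceZ mxtrace_frame_commutator mulr0.
Qed.

Lemma mxtrace_frame_lift w i : \tr (trace_frame i *m trace_lift w) = w i 0.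
Proof.
by rewrite mulmxDr mxtraceD -scalemxAr mxtraceZ mxtrace_frame_commutator mulr0 addr0
  mxtrace_frame_span_lift.
Qed.

Lemma det_trace_lift w : \det (trace_lift w) = 1.
Proof.
rewrite /trace_lift; set s := sigma _ _ _; set t := sqrt _.
have trK : \tr K = 0 by rewrite -[K]mul1mx (mxtrace_frame_commutator 0).
rewrite det2D detZ det_commutator_SL2 // -/s mxtraceZ trK !mulr0 addr0.
rewrite -scalemxAr mxtraceZ mxtrace_span_lift_commutator mulr0 subr0 /t sqrtK.
by rewrite mulrN divfK // opprB addrC subrK.
Qed.

Lemma trace_liftP w : let X := trace_lift w in
  [/\ \det X = 1, \tr X = w 0 0, \tr (A *m X) = w 1 0 & \tr (B *m X) = w 2 0].
Proof.
split; first exact: det_trace_lift.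
- by rewrite -[X in \tr X]mul1mx (mxtrace_frame_lift _ 0).
- exact: (mxtrace_frame_lift _ 1).
- exact: (mxtrace_frame_lift _ 2).
Qed.

End TraceLift.
End QuadraticallyClosed.

Section MagnusMap.
Variable R : realType.
Variable n : nat.
Implicit Types (A : n.-tuple 'M[R[i]]_2) (z : (3 * n - 3).-tuple R[i]).

Lemma nth_magnus A k : (k < 3 * n - 3)%N -> (magnus A)`_k = magnus_coord A k.
Proof. by move=> lt_k; rewrite -[k]/(val (Ordinal lt_k)) -tnth_nth tnth_mktuple. Qed.

Lemma sigma12_magnus A : (2 <= n)%N ->
  sigma12 (magnus A) = sigma (\tr (Amat A 0)) (\tr (Amat A 1)) (\tr (Amat A 0 *m Amat A 1)).
Proof. by move=> n_ge2; rewrite /sigma12 !nth_magnus //; lia. Qed.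

Lemma Amat_mktuple (f : nat -> 'M[R[i]]_2) m :
  (m < n)%N -> Amat [tuple f (val k) | k < n] m = f m.
Proof. by move=> lt_m; rewrite /Amat -[m]/(val (Ordinal lt_m)) -tnth_nth tnth_mktuple. Qed.

Lemma magnus_eq A z :
    \tr (Amat A 0) = z`_0 -> \tr (Amat A 1) = z`_1 -> \tr (Amat A 0 *m Amat A 1) = z`_2 ->
    (forall b, (0 < b < n.-1)%N ->
      [/\ \tr (Amat A b.+1) = z`_(3 * b), \tr (Amat A 0 *m Amat A b.+1) = z`_(3 * b).+1
        & \tr (Amat A 1 *m Amat A b.+1) = z`_(3 * b).+2]) ->
  magnus A = z.
Proof.
move=> t1 t2 t12 tblock; apply: eq_from_tnth => k.
rewrite tnth_mktuple (tnth_nth 0) /magnus_coord.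
have k_lt := ltn_ord k; have k_eq := divn_eq k 3; have r_lt : (k %% 3 < 3)%N by rewrite ltn_mod.
case: eqP => [b0 | b_neq0].
  case: eqP => [r0 | r_neq0]; [|case: eqP => [r1 | r_neq1]].
  - by rewrite t1 (_ : nat_of_ord k = 0%N) //; lia.
  - by rewrite t2 (_ : nat_of_ord k = 1%N) //; lia.
  - by rewrite t12 (_ : nat_of_ord k = 2%N) //; lia.
have /tblock[tm t1m t2m] : (0 < k %/ 3 < n.-1)%N by apply/andP; split; lia.
rewrite tm t1m t2m.
case: eqP => [r0 | r_neq0]; [|case: eqP => [r1 | r_neq1]].
- by rewrite [in RHS](_ : nat_of_ord k = 3 * (k %/ 3))%N //; lia.
- by rewrite [in RHS](_ : nat_of_ord k = (3 * (k %/ 3)).+1)%N //; lia.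
- by rewrite [in RHS](_ : nat_of_ord k = (3 * (k %/ 3)).+2)%N //; lia.
Qed.

End MagnusMap.

Theorem theorem5p4 (R : realType) (n : nat) (hn : (2 <= n)%N) :
  (forall A : n.-tuple 'M[R[i]]_2,
      inX A -> ~ inU12 A -> ~ inZ12 (magnus A)) /\
  (forall z : (3 * n - 3).-tuple R[i],
      ~ inZ12 z ->
      exists A : n.-tuple 'M[R[i]]_2, inX A /\ ~ inU12 A /\ magnus A = z).
Proof.
split=> [A _ notU | z notZ]; first by rewrite /inZ12 sigma12_magnus.
have two_neq0 : (2 : R[i]) != 0 by rewrite pnatr_eq0.
have [A [B [dA dB tA tB tAB]]] := sl2_pair_exists two_neq0 (@sqr_sqrtc R) z`_0 z`_1 z`_2.
have sAB : sigma (\tr A) (\tr B) (\tr (A *m B)) != 0 by rewrite tA tB tAB; apply/eqP.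
pose w b : 'cV[R[i]]_3 := \col_i z`_(3 * b + i).
have liftP b := trace_liftP two_neq0 (@sqr_sqrtc R) dA dB sAB (w b).
pose f m := if m == 0%N then A else if m == 1%N then B else trace_lift (@sqrtc R) A B (w m.-1).
exists [tuple f (val k) | k < n]; split; [|split].
- move=> k; rewrite tnth_mktuple /f.
  by case: ifP => // _; case: ifP => // _; case: (liftP k.-1).
- by rewrite /inU12 !Amat_mktuple ?(ltnW hn) // /f /= tA tB tAB.
- apply: magnus_eq; rewrite ?Amat_mktuple ?(ltnW hn) //= => -[//|b] /andP[_ b_lt].
  rewrite !Amat_mktuple ?(ltnW hn) /f //=; last by lia.
  by case: (liftP b.+1) => _; rewrite !mxE /= addn0 addn1 addn2 => -> -> ->.
Qed.
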